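(* For the gossip USD and every $t\ge1$: (1) $\mathbb E_{t-1}[\psi_t]\le\frac{\beta_{t-1}}{n}$. (2) Conditioned on $\mathcal F_{t-1}$, $\psi_t-\mathbb E_{t-1}[\psi_t]$ satisfies the $\big(\frac{24}{n},\frac{400\beta_{t-1}}{n}\big)$-Bernstein condition.
   Context: Vertex set $V$, $|V|=n$; opinions in $\Sigma=[k]\cup\{\bot\}$ ($\bot$ = undecided). USD update rule: $\mathsf{update}(\sigma_1,\sigma_2)=\bot$ if $\sigma_1,\sigma_2\in[k]$ and $\sigma_1\ne\sigma_2$; $=\sigma_2$ if $\sigma_1=\bot$; $=\sigma_1$ otherwise. Gossip USD: given $\mathrm{opn}_t\in\Sigma^V$, every $u\in V$ independently picks $v$ uniformly from $V$ and sets $\mathrm{opn}_{t+1}(u)=\mathsf{update}(\mathrm{opn}_t(u),\mathrm{opn}_t(v))$. Notation: $\alpha_t(i)=|\{u:\mathrm{opn}_t(u)=i\}|/n$, $\beta_t=\sum_{i\in[k]}\alpha_t(i)$, $\gamma_t=\sum_{i\in[k]}\alpha_t(i)^2$, $\psi_t=\beta_t(2\beta_t-1)-\gamma_t$. $(\mathcal F_t)$ is the natural filtration; $\mathbb E_{t-1}$ is conditional expectation given $\mathcal F_{t-1}$. Bernstein condition: for $D,s\ge0$, $X$ satisfies the $(D,s)$-Bernstein condition if $\mathbb E[e^{\lambda X}]\le\exp\!\big(\frac{\lambda^2 s/2}{1-|\lambda|D/3}\big)$ for all real $\lambda$ with $|\lambda|D<3$. Conditioned on $\mathcal F_{t-1}$: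 the same with $\mathbb E_{t-1}$, almost surely. *)

From HB Require Import structures.
From mathcomp Require Import all_boot all_order all_algebra.
From mathcomp Require Import reals sequences exp.
Set Implicit Arguments. Unset Strict Implicit. Unset Printing Implicit Defensive.
Import Order.TTheory GRing.Theory Num.Theory.
Local Open Scope ring_scope.

Section GossipUSD.
Variables (R : realType) (V : finType) (k : nat).

(* Opinions Sigma = [k] u {bot}: Some i is opinion i, None is undecided. *)
Definition opinion := option 'I_k.
Definition config := {ffun V -> opinion}.
Definition choice := {ffun V -> V}.   (* the samples v picked by every u *)

Definition update (s1 s2 : opinion) : opinion :=
  match s1, s2 with
  | Some i, Some j => if i == j then Some i else None
  | None, _ => s2
  | Some i, None => Some i
  end.

Definition step (c : config) (f : choice) : config :=
  [ffun u => update (c u) (c (f u))].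

Definition nV : R := (#|V|)%:R.
Definition alpha (c : config) (i : 'I_k) : R :=
  (#|[set u | c u == Some i]|)%:R / nV.
Definition beta (c : config) : R := \sum_(i < k) alpha c i.
Definition gamma (c : config) : R := \sum_(i < k) alpha c i ^+ 2.
Definition psi (c : config) : R := beta c * (2 * beta c - 1) - gamma c.

(* Sample space for the first t rounds: the t independent uniform
   choice functions; uniform probability on this finite space. *)
Definition Omega (t : nat) := {ffun 'I_t -> choice}.

Fixpoint opn (c0 : config) (t : nat) (w : Omega t) (s : nat) : config :=
  match s with
  | 0 => c0
  | s'.+1 => match (insub s' : option 'I_t) with
             | Some i => step (opn c0 w s') (w i)
             | None => opn c0 w s'
             end
  end.

(* the atom of F_{s} (natural filtration of opn, times 0..s) containing w *)
Definition atom (c0 : config) (t s : nat) (w : Omega t) : {set Omega t} :=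
  [set w' | [forall j : 'I_s.+1, opn c0 w' j == opn c0 w j]].

(* conditional expectation E[X | F_s] evaluated at w (uniform measure) *)
Definition condE (c0 : config) (t s : nat) (X : Omega t -> R) (w : Omega t) : R :=
  (\sum_(w' in atom c0 s w) X w') / (#|atom c0 s w|)%:R.

End GossipUSD.

Definition bernstein {R : realType} (D s : R) (mgf : R -> R) : Prop :=
  forall lam : R, `|lam| * D < 3 ->
    mgf lam <= expR ((lam ^+ 2 * s / 2) / (1 - `|lam| * D / 3)).

(* Write [psi c = n^-2 \sum_(v, w) psi_kernel (c v) (c w)]. Conditioning on
   F_(t-1) amounts to averaging over the last round's uniform samples. In that
   round distinct vertices sample independently and [psi_kernel] vanishes on
   the diagonal, so [E psi'] is [n^-4] times the sum of [kernel_sum v w] over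
   all [v <> w]. The sum over all pairs is a polynomial in the opinion counts
   which a symmetrisation shows to be nonpositive, and each diagonal term is at
   least [- n^2 beta]; this gives [E psi' <= beta / n].
   For concentration, [psi'] is a function of the [n] independent samples;
   changing one sample moves it by at most [4 / n], and the sample of [u]
   matters only when it points to a decided vertex. A bounded-differences
   estimate along the Doob martingale of the samples bounds the moment
   generating function with variance proxy [32 beta / n]. *)

From HB Require Import structures.
From mathcomp Require Import all_boot all_order all_algebra.
From mathcomp Require Import reals sequences exp.
From mathcomp Require Import ring lra.
Import Order.TTheory GRing.Theory Num.Theory.
Local Open Scope ring_scope.
Set Implicit Arguments. Unset Strict Implicit. Unset Printing Implicit Defensive.

Lemma sum_const_card (R : realType) (J : finType) (c : R) :
  \sum_(y : J) c = c * #|J|%:R.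
Proof. by rewrite sumr_const mulr_natr. Qed.

Section ProductSpace.
Variables (R : realType) (I J : finType).
Implicit Types (x f : {ffun I -> J}) (s : seq I) (F : {ffun I -> J} -> R).

Definition fupd x u y : {ffun I -> J} := [ffun v => if v == u then y else x v].

Lemma fupd_eq x u y : fupd x u y u = y.
Proof. by rewrite ffunE eqxx. Qed.

Lemma fupd_neq x u y v : v != u -> fupd x u y v = x v.
Proof. by rewrite ffunE => /negbTE ->. Qed.

Lemma fupd_fupd x u y z : fupd (fupd x u y) u z = fupd x u z.
Proof. by apply/ffunP=> v; rewrite !ffunE; case: eqP. Qed.

Lemma fupd_id x u : fupd x u (x u) = x.
Proof. by apply/ffunP=> v; rewrite !ffunE; case: eqP => [->|]. Qed.

Definition swap_coord u (p : {ffun I -> J} * J) := (fupd p.1 u p.2, p.1 u).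

Lemma swap_coordK u : involutive (swap_coord u).
Proof. by case=> x y; rewrite /swap_coord /= fupd_fupd fupd_id fupd_eq. Qed.

Lemma sum_fupd (P : pred {ffun I -> J}) u F :
  (forall x y, P (fupd x u y) = P x) ->
  \sum_(x | P x) \sum_(y : J) F (fupd x u y) = #|J|%:R * \sum_(x | P x) F x.
Proof.
move=> PE; rewrite pair_big /= (reindex_inj (inv_inj (swap_coordK u))) /=.
rewrite (eq_big (fun p : {ffun I -> J} * J => P p.1 && true) (fun p => F p.1)).
- by rewrite -(pair_big P xpredT (fun x _ => F x)) mulr_sumr;
    apply: eq_bigr => x _; rewrite sumr_const mulr_natl.
- by move=> p; rewrite /= PE.
- by move=> p _; rewrite /= fupd_fupd fupd_id.
Qed.

Lemma sum_eval (P : pred {ffun I -> J}) u (phi : J -> R) :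
  (forall x y, P (fupd x u y) = P x) ->
  #|J|%:R * \sum_(x | P x) phi (x u) = #|P|%:R * \sum_(y : J) phi y.
Proof.
move=> PE; rewrite -(@sum_fupd P u (fun x => phi (x u))) //.
under eq_bigr do under eq_bigr do rewrite fupd_eq.
by rewrite sumr_const mulr_natl.
Qed.

Definition card_fun : R := #|{ffun I -> J}|%:R.

Lemma sum_eval2 (phi : J -> J -> R) u v : u != v ->
  #|J|%:R ^+ 2 * \sum_(f : {ffun I -> J}) phi (f u) (f v)
    = card_fun * \sum_x \sum_y phi x y.
Proof.
move=> uv; rewrite expr2 -mulrA.
rewrite -(@sum_fupd xpredT u (fun f => phi (f u) (f v))) // exchange_big !mulr_sumr.
apply: eq_bigr => x _; under eq_bigr do rewrite fupd_eq fupd_neq 1?eq_sym //.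
exact: (@sum_eval xpredT v (phi x)).
Qed.

Definition glue s x f : {ffun I -> J} := [ffun v => if v \in s then x v else f v].

Definition avg_on s F f : R := (\sum_x F (glue s x f)) / card_fun.

Lemma glue_nil x f : glue [::] x f = f.
Proof. by apply/ffunP=> v; rewrite ffunE. Qed.

Lemma glue_glue s x z f : glue s x (glue s z f) = glue s x f.
Proof. by apply/ffunP=> v; rewrite !ffunE; case: (v \in s). Qed.

Lemma glue_fupd_out s x f u y : u \notin s ->
  glue s x (fupd f u y) = fupd (glue s x f) u y.
Proof.
move=> us; apply/ffunP=> w; rewrite !ffunE.
by case: eqP => [->|]; [rewrite (negbTE us)|].
Qed.

Lemma glue_cons s x f u y : u \notin s ->
  glue s x (fupd f u y) = glue (u :: s) (fupd x u y) f.
Proof.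
move=> us; apply/ffunP=> w; rewrite !ffunE inE.
by case: eqP => [->|]; [rewrite (negbTE us)|].
Qed.

Lemma avg_on_ext s F1 F2 f :
  (forall x, F1 (glue s x f) = F2 (glue s x f)) -> avg_on s F1 f = avg_on s F2 f.
Proof. by move=> E; rewrite /avg_on; congr (_ / _); apply: eq_bigr. Qed.

Lemma avg_on_glue s F x f : avg_on s F (glue s x f) = avg_on s F f.
Proof. by rewrite /avg_on; under eq_bigr do rewrite glue_glue. Qed.

Lemma avg_on_all s F f : (forall v, v \in s) -> avg_on s F f = (\sum_x F x) / card_fun.
Proof.
move=> sT; rewrite /avg_on; congr (_ / _); apply: eq_bigr => x _.
by congr F; apply/ffunP=> v; rewrite ffunE sT.
Qed.

Lemma avg_on_mull s F c f : (forall x, c (glue s x f) = c f) ->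
  avg_on s (fun g => c g * F g) f = c f * avg_on s F f.
Proof.
move=> cE; rewrite /avg_on mulrA mulr_sumr; congr (_ / _).
by apply: eq_bigr => x _; rewrite cE.
Qed.

Hypothesis J_gt0 : (0 < #|J|)%N.

Lemma card_fun_gt0 : 0 < card_fun.
Proof. by rewrite ltr0n card_ffun expn_gt0 J_gt0. Qed.

Lemma avg_on_nil F f : avg_on [::] F f = F f.
Proof.
rewrite /avg_on; under eq_bigr do rewrite glue_nil.
by rewrite sumr_const -mulr_natr mulfK // gt_eqF // card_fun_gt0.
Qed.

Lemma avg_on_cons u s F f : u \notin s ->
  avg_on (u :: s) F f = (\sum_(y : J) avg_on s F (fupd f u y)) / #|J|%:R.
Proof.
move=> us; rewrite /avg_on -mulr_suml exchange_big /=.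
under [X in X / _ / _]eq_bigr do under eq_bigr do rewrite glue_cons //.
rewrite (@sum_fupd xpredT u (fun z => F (glue (u :: s) z f))) //.
have Jn : #|J|%:R != 0 :> R by rewrite pnatr_eq0 -lt0n.
by set S := \sum_x _; rewrite [RHS]mulrAC [_ * S]mulrC mulfK.
Qed.

End ProductSpace.

Lemma expR_le_quad (R : realType) (x : R) : `|x| <= 1/2 -> expR x <= 1 + x + 2 * x ^+ 2.
Proof.
rewrite ler_norml => /andP[xl xu].
(* [expR x = expR (- x / 2) ^- 2 <= (1 - x / 2) ^- 2 <= q] *)
set e := expR (- (x / 2)).
have e_ge : 1 - x / 2 <= e by rewrite /e (le_trans _ (expR_ge1Dx _)).
have expRe : expR x * (e * e) = 1.
  by rewrite /e -!expRD (_ : x + _ = 0) ?expR0 //; field.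
set q := 1 + x + 2 * x ^+ 2.
have q_ge : 1 <= q * (e * e).
  have q0 : 0 <= q by rewrite /q; nra.
  have ee : (1 - x / 2) * (1 - x / 2) <= e * e by apply: ler_pM => //; lra.
  by apply: le_trans (ler_wpM2l q0 ee); rewrite /q; nra.
apply: le_trans (_ : expR x * (q * (e * e)) <= q).
  by rewrite -{1}[expR x]mulr1 ler_wpM2l ?(ltW (expR_gt0 x)).
by rewrite mulrCA expRe mulr1.
Qed.

Section UniformMGF.
Variables (R : realType) (J : finType).
Variables (phi : J -> R) (S : pred J) (d : J) (L : R).
Hypothesis J_gt0 : (0 < #|J|)%N.
Hypothesis phi_lip : forall x y, `|phi x - phi y| <= L.
Hypothesis phi_S : forall x, S x -> phi x = phi d.

Local Notation n := (#|J|%:R : R).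
Local Notation mu := ((\sum_z phi z) / n).

Let n_gt0 : 0 < n. Proof. by rewrite ltr0n. Qed.

Lemma sum_dev_mean : \sum_y (phi y - mu) = 0.
Proof. by rewrite sumrB sum_const_card mulfVK ?subrr // gt_eqF. Qed.

Lemma dev_mean_le y : `|phi y - mu| <= L.
Proof.
have -> : phi y - mu = (\sum_z (phi y - phi z)) / n.
  by rewrite sumrB sum_const_card mulrBl mulfK // gt_eqF.
rewrite normrM normfV (gtr0_norm n_gt0) ler_pdivrMr //.
apply: le_trans (ler_norm_sum _ _ _) _.
by rewrite -sum_const_card; apply: ler_sum => z _.
Qed.

Lemma sum_sqr_dev_mean_le : \sum_y (phi y - mu) ^+ 2 <= L ^+ 2 * #|[predC S]|%:R.
Proof.
have bias : \sum_y (phi y - phi d) ^+ 2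
    = \sum_y (phi y - mu) ^+ 2 + (mu - phi d) ^+ 2 * n.
  have -> : \sum_y (phi y - phi d) ^+ 2 = \sum_y (phi y - mu) ^+ 2
      + 2 * (mu - phi d) * \sum_y (phi y - mu) + (mu - phi d) ^+ 2 * n.
    rewrite -sum_const_card mulr_sumr -!big_split /=.
    by apply: eq_bigr => y _; ring.
  by rewrite sum_dev_mean mulr0 addr0.
apply: (@le_trans _ _ (\sum_y (phi y - phi d) ^+ 2)).
  by rewrite bias lerDl mulr_ge0 ?sqr_ge0 // ltW.
rewrite -sum1_card natr_sum mulr_sumr [leRHS]big_mkcond /=.
apply: ler_sum => y _; case: ifPn => [_|]; last first.
  by rewrite inE negbK => /phi_S ->; rewrite subrr expr0n.
have := phi_lip y d; rewrite mulr1 -(real_normK (num_real (phi y - phi d))).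
by have := normr_ge0 (phi y - phi d); nra.
Qed.

(* Hoeffding's bound, with the variance proxy scaled by the mass outside [S]. *)
Lemma mgf_uniform_le lam : `|lam| * L <= 1/2 ->
  (\sum_y expR (lam * (phi y - mu))) / n
     <= expR (2 * lam ^+ 2 * L ^+ 2 * (#|[predC S]|%:R / n)).
Proof.
move=> lamL.
have quad : \sum_y expR (lam * (phi y - mu)) <=
    \sum_y (1 + lam * (phi y - mu) + 2 * lam ^+ 2 * (phi y - mu) ^+ 2).
  apply: ler_sum => y _; rewrite -mulrA -exprMn; apply: expR_le_quad.
  by rewrite normrM (le_trans _ lamL) // ler_wpM2l // dev_mean_le.
rewrite !big_split /= -!mulr_sumr sum_dev_mean mulr0 addr0 sum_const_card mul1r in quad.
apply: le_trans (expR_ge1Dx _); rewrite ler_pdivrMr //; apply: (le_trans quad).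
rewrite [leRHS]mulrDl mul1r lerD2l.
rewrite -[leRHS]mulrA divfK ?gt_eqF // -[leRHS]mulrA.
have lam2 : 0 <= 2 * lam ^+ 2 by rewrite mulr_ge0 // sqr_ge0.
by rewrite ler_wpM2l //; apply: sum_sqr_dev_mean_le.
Qed.

End UniformMGF.

Section BoundedDifferences.
Variables (R : realType) (I J : finType).
Variables (G : {ffun I -> J} -> R) (S : I -> pred J) (d : I -> J) (L lam : R).
Hypothesis J_gt0 : (0 < #|J|)%N.
Hypothesis G_lip : forall f u x y, `|G (fupd f u x) - G (fupd f u y)| <= L.
Hypothesis G_S : forall f u x, S u x -> G (fupd f u x) = G (fupd f u (d u)).
Hypothesis lamL : `|lam| * L <= 1/2.

Local Notation K := (2 * lam ^+ 2 * L ^+ 2).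
Local Notation p u := (#|[predC S u]|%:R / #|J|%:R : R).

Lemma avg_on_lip s f u x y : u \notin s ->
  `|avg_on s G (fupd f u x) - avg_on s G (fupd f u y)| <= L.
Proof.
move=> us; rewrite /avg_on -mulrBl -sumrB normrM normfV (gtr0_norm (card_fun_gt0 _ _ J_gt0)).
rewrite ler_pdivrMr ?card_fun_gt0 //; apply: le_trans (ler_norm_sum _ _ _) _.
rewrite /card_fun -sum_const_card; apply: ler_sum => z _.
by rewrite !glue_fupd_out.
Qed.

Lemma avg_on_S s f u x : u \notin s -> S u x ->
  avg_on s G (fupd f u x) = avg_on s G (fupd f u (d u)).
Proof.
move=> us Sx; rewrite /avg_on; congr (_ / _); apply: eq_bigr => z _.
by rewrite !glue_fupd_out // G_S.
Qed.

(* Induction along the Doob martingale that reveals the coordinates of [s] one at a time. *)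
Lemma avg_on_mgf_le s : uniq s -> forall f,
  avg_on s (fun g => expR (lam * (G g - avg_on s G g))) f <= expR (K * \sum_(u <- s) p u).
Proof.
elim: s => [|u s IH] /= s_uniq f.
  by rewrite !avg_on_nil // subrr mulr0 big_nil mulr0.
case/andP: s_uniq => us s_uniq; rewrite avg_on_cons //.
set H := avg_on s G; set mu := avg_on (u :: s) G f.
have factor y :
    avg_on s (fun g => expR (lam * (G g - avg_on (u :: s) G g))) (fupd f u y)
    = expR (lam * (H (fupd f u y) - mu))
      * avg_on s (fun g => expR (lam * (G g - H g))) (fupd f u y).
  rewrite -(@avg_on_mull _ _ _ s _ (fun g => expR (lam * (H g - mu)))); last first.
    by move=> x; rewrite /H avg_on_glue.
  apply: avg_on_ext => x.
  by rewrite glue_cons // avg_on_glue -/mu -glue_cons // -expRD; congr expR; ring.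
rewrite (eq_bigr _ (fun y _ => factor y)).
apply: (@le_trans _ _ ((\sum_y expR (lam * (H (fupd f u y) - mu))
                          * expR (K * \sum_(v <- s) p v)) / #|J|%:R)).
  rewrite ler_pM2r ?invr_gt0 ?ltr0n //; apply: ler_sum => y _.
  by rewrite ler_pM2l ?expR_gt0 //; apply: IH.
rewrite -mulr_suml mulrAC big_cons mulrDr expRD ler_pM2r ?expR_gt0 //.
rewrite /mu avg_on_cons //.
apply: (mgf_uniform_le (S := S u) (d := d u)) => // [x y|x Sx].
  exact: avg_on_lip.
exact: avg_on_S.
Qed.

Lemma mgf_bounded_differences :
  (\sum_g expR (lam * (G g - (\sum_h G h) / card_fun R I J))) / card_fun R I J
    <= expR (K * \sum_u p u).
Proof.
have allI v : v \in enum I by rewrite mem_enum.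
have := avg_on_mgf_le (enum_uniq I) [ffun u => d u].
rewrite avg_on_all //; under eq_bigr do rewrite avg_on_all //.
by rewrite big_enum.
Qed.

End BoundedDifferences.

Section OpinionIndicators.
Variables (R : realType) (k : nat).
Implicit Types (o : opinion k).

Definition ind_decided o : R := if o is Some _ then 1 else 0.
Definition ind_undecided o : R := if o is None then 1 else 0.
Definition ind_op (i : 'I_k) o : R := if o == Some i then 1 else 0.

Definition psi_kernel o o' : R :=
  2 * ind_decided o * ind_decided o' - ind_decided o
  - \sum_i ind_op i o * ind_op i o'.

Lemma ind_decided_ge0 o : 0 <= ind_decided o. Proof. by case: o. Qed.
Lemma ind_decided_le1 o : ind_decided o <= 1. Proof. by case: o. Qed.
Lemma ind_undecided_ge0 o : 0 <= ind_undecided o. Proof. by case: o. Qed.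
Lemma ind_op_ge0 i o : 0 <= ind_op i o. Proof. by rewrite /ind_op; case: ifP. Qed.

Lemma ind_undecidedD o : ind_undecided o + ind_decided o = 1.
Proof. by case: o => [a|] /=; rewrite ?add0r ?addr0. Qed.

Lemma sum_ind_op o : \sum_i ind_op i o = ind_decided o.
Proof.
case: o => [a|] /=; last by rewrite big1.
rewrite (bigD1 a) //= /ind_op eqxx big1 ?addr0 // => i ia.
by rewrite (_ : (Some a == Some i) = false) //; apply/negbTE; rewrite eq_sym.
Qed.

Lemma sum_ind_op_mulSome a o : \sum_i ind_op i (Some a) * ind_op i o = ind_op a o.
Proof.
rewrite (bigD1 a) //= {1}/ind_op eqxx mul1r big1 ?addr0 // => i ia.
by rewrite /ind_op (_ : (Some a == Some i) = false) ?mul0r //; apply/negbTE; rewrite eq_sym.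
Qed.

Lemma sum_ind_op_mulNone o : \sum_i ind_op i None * ind_op i o = 0.
Proof. by rewrite big1 // => i _; rewrite mul0r. Qed.

Lemma psi_kernel_diag o : psi_kernel o o = 0.
Proof.
rewrite /psi_kernel; case: o => [a|]; last by rewrite sum_ind_op_mulNone /= !mulr0 !subr0.
by rewrite sum_ind_op_mulSome /ind_op /= eqxx; ring.
Qed.

Lemma psi_kernel_norm_le1 o o' : `|psi_kernel o o'| <= 1.
Proof.
rewrite /psi_kernel; case: o => [a|]; last first.
  by rewrite sum_ind_op_mulNone /= mulr0 !mul0r !subr0 normr0.
rewrite sum_ind_op_mulSome /ind_op /=; case: o' => [b|] /=; last first.
  by rewrite (_ : 2 * 1 * 0 - 1 - 0 = -1 :> R) ?normrN1 //; ring.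
case: (Some b == Some a).
  by rewrite (_ : 2 * 1 * 1 - 1 - 1 = 0 :> R) ?normr0 //; ring.
by rewrite (_ : 2 * 1 * 1 - 1 - 0 = 1 :> R) ?normr1 //; ring.
Qed.

Lemma psi_kernel_dist_le2 o1 o1' o2 o2' :
  `|psi_kernel o1 o2 - psi_kernel o1' o2'| <= 2.
Proof.
apply: le_trans (ler_normB _ _) _.
by have := psi_kernel_norm_le1 o1 o2; have := psi_kernel_norm_le1 o1' o2'; lra.
Qed.

Lemma ind_op_update i o o' : ind_op i (update o o') =
  ind_op i o * ind_op i o' + ind_op i o * ind_undecided o' + ind_undecided o * ind_op i o'.
Proof.
rewrite /ind_op; case: o => [a|]; case: o' => [b|] /=;
  rewrite ?mulr0 ?mul0r ?addr0 ?add0r ?mul1r ?mulr1 //.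
case: (eqVneq a b) => [<-|ab]; first by case: (Some a == Some i); rewrite ?mulr1 ?mul0r.
case: (Some a =P Some i) => [[ai]|_]; last by rewrite mul0r.
case: (Some b =P Some i) => [[bi]|_]; last by rewrite mulr0.
by rewrite ai bi eqxx in ab.
Qed.

Lemma ind_decided_update a o : 1 - ind_decided (update (Some a) o) <= ind_decided o.
Proof. by case: o => [b|] /=; [case: (a == b); rewrite /= ?subrr ?subr0|rewrite subrr]. Qed.

Lemma update_id o : update o o = o.
Proof. by case: o => [a|] //=; rewrite eqxx. Qed.

Lemma update_undecided o : update o None = o.
Proof. by case: o. Qed.

Lemma sum_psi_kernel (X : finType) (a b : X -> opinion k) :
  \sum_p \sum_q psi_kernel (a p) (b q) =
  2 * (\sum_p ind_decided (a p)) * (\sum_q ind_decided (b q))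
  - (\sum_p ind_decided (a p)) * #|X|%:R
  - \sum_i (\sum_p ind_op i (a p)) * (\sum_q ind_op i (b q)).
Proof.
have inner p : \sum_q psi_kernel (a p) (b q)
    = 2 * ind_decided (a p) * (\sum_q ind_decided (b q)) - ind_decided (a p) * #|X|%:R
      - \sum_i ind_op i (a p) * (\sum_q ind_op i (b q)).
  rewrite /psi_kernel !sumrB -mulr_sumr sum_const_card; congr (_ - _ - _).
  by rewrite exchange_big /=; apply: eq_bigr => i _; rewrite mulr_sumr.
rewrite (eq_bigr _ (fun p _ => inner p)) !sumrB; congr (_ - _ - _).
- by rewrite -!mulr_suml -mulr_sumr.
- by rewrite -mulr_suml.
- by rewrite exchange_big; apply: eq_bigr => i _; rewrite mulr_suml.
Qed.

End OpinionIndicators.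

Section PsiKernel.
Variables (R : realType) (V : finType) (k : nat).
Hypothesis V_gt0 : (0 < #|V|)%N.
Implicit Types (c : config V k).

Lemma nV_gt0 : 0 < nV R V.
Proof. by rewrite ltr0n. Qed.

Lemma alphaE c i : alpha R c i = (\sum_v ind_op R i (c v)) / nV R V.
Proof.
by rewrite /alpha cardsE -sum1_card natr_sum big_mkcond.
Qed.

Lemma betaE c : beta R c = (\sum_v ind_decided R (c v)) / nV R V.
Proof.
rewrite /beta (eq_bigr _ (fun i _ => alphaE c i)) -mulr_suml exchange_big /=.
by congr (_ / _); apply: eq_bigr => v _; rewrite sum_ind_op.
Qed.

Lemma beta_ge0 c : 0 <= beta R c.
Proof.
rewrite betaE divr_ge0 ?(ltW nV_gt0) //.
by apply: sumr_ge0 => v _; apply: ind_decided_ge0.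
Qed.

Lemma psiE_kernel c :
  psi R c = (\sum_v \sum_w psi_kernel R (c v) (c w)) / nV R V ^+ 2.
Proof.
have gammaE : gamma R c
    = (\sum_i (\sum_v ind_op R i (c v)) * (\sum_v ind_op R i (c v))) / nV R V ^+ 2.
  by rewrite mulr_suml; apply: eq_bigr => i _; rewrite alphaE expr_div_n expr2.
rewrite sum_psi_kernel /psi betaE gammaE.
by field; rewrite lt0r_neq0 // nV_gt0.
Qed.

End PsiKernel.

Section CountInequality.
Variables (R : realType) (k : nat) (N : 'I_k -> R) (r : R).
Hypothesis N_ge0 : forall i, 0 <= N i.
Hypothesis r_ge0 : 0 <= r.

Local Notation K i := (N i * N i + 2 * r * N i).

Let K_ge0 i : 0 <= K i.
Proof. by rewrite addr_ge0 ?mulr_ge0. Qed.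

Lemma sum_cross_dev_le0 : \sum_i \sum_j K i * (N j * (N j - N i)) <= 0.
Proof.
(* symmetrising in [i, j], the [r]-terms cancel *)
suff -> : \sum_i \sum_j K i * (N j * (N j - N i))
    = - (\sum_i \sum_j N i * N j * (N i - N j) ^+ 2) / 2.
  have S_ge0 : 0 <= \sum_i \sum_j N i * N j * (N i - N j) ^+ 2.
    apply: sumr_ge0 => i _; apply: sumr_ge0 => j _.
    by rewrite mulr_ge0 ?sqr_ge0 // mulr_ge0.
  by rewrite mulNr oppr_le0 divr_ge0.
apply: (@mulIf _ 2); first by rewrite pnatr_eq0.
rewrite divfK ?pnatr_eq0 // mulr_natr mulr2n [X in _ + X]exchange_big -big_split -sumrN /=.
by apply: eq_bigr => i _; rewrite -big_split -sumrN /=; apply: eq_bigr => j _; ring.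
Qed.

(* With [N i] vertices of opinion [i] and [r] undecided ones, [K i] counts the
   (vertex, sample) pairs whose update yields [i]; this is the statement
   [\sum_(v, w) kernel_sum v w <= 0] of [sum_kernel_sum_le0]. *)
Lemma pair_count_ineq :
  2 * (\sum_i K i) * (\sum_i K i) - (\sum_i K i) * (r + \sum_i N i) ^+ 2
  - \sum_i K i * K i <= 0.
Proof.
set M := \sum_i K i; set B := \sum_i N i.
have M_E : M = \sum_i N i * N i + 2 * r * B by rewrite /M /B big_split /= mulr_sumr.
have crossE i : \sum_j N j * (N j - N i) = \sum_j N j * N j - B * N i.
  by under eq_bigr do rewrite mulrBr; rewrite sumrB mulr_suml.
have termE i : K i * (2 * M - K i - (r + B) ^+ 2)
    = K i * - (r - B + N i) ^+ 2 + 2 * \sum_j K i * (N j * (N j - N i)).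
  by rewrite -mulr_sumr crossE M_E; ring.
have -> : 2 * M * M - M * (r + B) ^+ 2 - \sum_i K i * K i
    = \sum_i K i * (2 * M - K i - (r + B) ^+ 2).
  rewrite [RHS](eq_bigr (fun i => K i * (2 * M) - K i * K i - K i * (r + B) ^+ 2));
    last by move=> i _; ring.
  by rewrite !sumrB -!mulr_suml -/M; ring.
rewrite (eq_bigr _ (fun i _ => termE i)) big_split /= -mulr_sumr.
have := sum_cross_dev_le0.
suff : \sum_i K i * - (r - B + N i) ^+ 2 <= 0 by lra.
by apply: sumr_le0 => i _; rewrite mulrN oppr_le0 mulr_ge0 ?K_ge0 ?sqr_ge0.
Qed.

End CountInequality.

Lemma sum_sqr_le_sqr_sum (R : realType) (I : finType) (F : I -> R) :
  (forall i, 0 <= F i) -> \sum_i F i ^+ 2 <= (\sum_i F i) ^+ 2.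
Proof.
move=> F_ge0; rewrite [leRHS]expr2 mulr_suml; apply: ler_sum => i _.
rewrite expr2 ler_wpM2l // (bigD1 i) //= lerDl.
by apply: sumr_ge0 => j _.
Qed.

Section StepMean.
Variables (R : realType) (V : finType) (k : nat) (c : config V k).
Hypothesis V_gt0 : (0 < #|V|)%N.
Local Notation n := (nV R V).
Local Notation count_op i := (\sum_x ind_op R i (c x)).
Local Notation count_undecided := (\sum_x ind_undecided R (c x)).
Local Notation count_decided := (\sum_x ind_decided R (c x)).

Definition next_op (v x : V) : opinion k := update (c v) (c x).

Local Notation decided_next v := (\sum_x ind_decided R (next_op v x)).

Definition kernel_sum (v w : V) : R :=
  \sum_x \sum_y psi_kernel R (next_op v x) (next_op w y).

Lemma nV_count : n = count_undecided + \sum_i count_op i.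
Proof.
rewrite /nV -[LHS]mul1r -sum_const_card exchange_big -big_split /=.
by apply: eq_bigr => x _; rewrite sum_ind_op ind_undecidedD.
Qed.

Lemma sum_ind_op_next i : \sum_(p : V * V) ind_op R i (next_op p.1 p.2)
  = count_op i * count_op i + 2 * count_undecided * count_op i.
Proof.
rewrite -(pair_bigA _ (fun v x => ind_op R i (next_op v x))) /=.
under eq_bigr do under eq_bigr do rewrite ind_op_update.
under eq_bigr do rewrite !big_split /=.
by rewrite !big_split /= -!big_distrlr /=; ring.
Qed.

Lemma sum_kernel_sum_le0 : \sum_v \sum_w kernel_sum v w <= 0.
Proof.
have -> : \sum_v \sum_w kernel_sum v w =
    \sum_(p : V * V) \sum_(q : V * V) psi_kernel R (next_op p.1 p.2) (next_op q.1 q.2).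
  rewrite -(pair_bigA _ (fun v x => \sum_(q : V * V) psi_kernel R (next_op v x) (next_op q.1 q.2))).
  apply: eq_bigr => v _; rewrite /kernel_sum exchange_big /=; apply: eq_bigr => x _.
  by rewrite (pair_bigA _ (fun w y => psi_kernel R (next_op v x) (next_op w y))).
have decidedE : \sum_(p : V * V) ind_decided R (next_op p.1 p.2)
    = \sum_i (count_op i * count_op i + 2 * count_undecided * count_op i).
  rewrite -(eq_bigr _ (fun i _ => sum_ind_op_next i)) exchange_big /=.
  by apply: eq_bigr => p _; rewrite sum_ind_op.
rewrite sum_psi_kernel decidedE card_prod natrM -expr2 -/(nV R V) nV_count.
rewrite (eq_bigr _ (fun i _ => congr2 *%R (sum_ind_op_next i) (sum_ind_op_next i))).
apply: pair_count_ineq => [i|]; apply: sumr_ge0 => x _.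
  exact: ind_op_ge0.
exact: ind_undecided_ge0.
Qed.

Lemma decided_next_mass v :
  decided_next v * (n - decided_next v) <= n * count_decided.
Proof.
set m := decided_next v.
have m_ge0 : 0 <= m by apply: sumr_ge0 => x _; apply: ind_decided_ge0.
have m_le : m <= n.
  rewrite /nV -[leRHS]mul1r -sum_const_card.
  by apply: ler_sum => x _; apply: ind_decided_le1.
have B_ge0 : 0 <= count_decided by apply: sumr_ge0 => x _; apply: ind_decided_ge0.
case cv: (c v) => [a|].
- have : n - m <= count_decided.
    rewrite /nV -[X in X - _]mul1r -sum_const_card -sumrB; apply: ler_sum => x _.
    by rewrite /next_op cv ind_decided_update.
  nra.
- have -> : m = count_decided by apply: eq_bigr => x _; rewrite /next_op cv.
  nra.
Qed.

Lemma kernel_sum_diag_ge v : - kernel_sum v v <= n * count_decided.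
Proof.
rewrite /kernel_sum sum_psi_kernel -/(nV R V).
set m := decided_next v.
have sqr_le : \sum_i (\sum_x ind_op R i (next_op v x)) * (\sum_x ind_op R i (next_op v x))
    <= m * m.
  have mE : m = \sum_i \sum_x ind_op R i (next_op v x).
    by rewrite exchange_big; apply: eq_bigr => x _; rewrite sum_ind_op.
  rewrite mE -expr2; under eq_bigr do rewrite -expr2.
  apply: sum_sqr_le_sqr_sum => i; apply: sumr_ge0 => x _; exact: ind_op_ge0.
have := decided_next_mass v; rewrite -/m; nra.
Qed.

Lemma sum_psi_step : n ^+ 4 * \sum_(f : choice V) psi R (step c f)
  = card_fun R V V * (\sum_v \sum_w kernel_sum v w - \sum_v kernel_sum v v).
Proof.
have n_gt0 := nV_gt0 R V_gt0.
have pairE v w :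
    n ^+ 2 * \sum_(f : choice V) psi_kernel R (next_op v (f v)) (next_op w (f w))
    = card_fun R V V * (kernel_sum v w - (v == w)%:R * kernel_sum v v).
  case: (eqVneq v w) => [<-|vw].
    by rewrite big1 ?mulr0 ?mul1r ?subrr ?mulr0 // => f _; rewrite psi_kernel_diag.
  by rewrite mul0r subr0 (sum_eval2 (fun x y => psi_kernel R (next_op v x) (next_op w y)) vw).
rewrite (eq_bigr _ (fun f _ => psiE_kernel R V_gt0 (step c f))) -mulr_suml.
have -> : \sum_(f : choice V) \sum_v \sum_w psi_kernel R (step c f v) (step c f w)
    = \sum_v \sum_w \sum_(f : choice V) psi_kernel R (next_op v (f v)) (next_op w (f w)).
  rewrite exchange_big; apply: eq_bigr => v _; rewrite exchange_big.
  by apply: eq_bigr => w _; apply: eq_bigr => f _; rewrite !ffunE.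
set S := \sum_v _.
rewrite (_ : n ^+ 4 * (S / n ^+ 2) = n ^+ 2 * S); last by field; rewrite gt_eqF.
rewrite -sumrB !mulr_sumr; apply: eq_bigr => v _; rewrite mulr_sumr.
have deltaE : \sum_w (v == w)%:R * kernel_sum v v = kernel_sum v v.
  rewrite (bigD1 v) //= eqxx mul1r big1 ?addr0 // => w wv.
  by rewrite eq_sym (negbTE wv) mul0r.
by rewrite (eq_bigr _ (fun w _ => pairE v w)) -mulr_sumr sumrB deltaE.
Qed.

Lemma mean_psi_step_le :
  (\sum_(f : choice V) psi R (step c f)) / card_fun R V V <= beta R c / n.
Proof.
have n_gt0 := nV_gt0 R V_gt0; have cf_gt0 := @card_fun_gt0 R V V V_gt0.
rewrite ler_pdivrMr // -(ler_pM2l (exprn_gt0 4 n_gt0)) sum_psi_step betaE //.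
have diag : - \sum_v kernel_sum v v <= n * n * count_decided.
  rewrite -sumrN (_ : n * n * _ = \sum_(v : V) (n * count_decided)).
    by apply: ler_sum => v _; apply: kernel_sum_diag_ge.
  by rewrite sum_const_card -/(nV R V); ring.
have := sum_kernel_sum_le0.
rewrite (_ : n ^+ 4 * (count_decided / n / n * card_fun R V V)
           = card_fun R V V * (n * n * count_decided)); last by field; rewrite gt_eqF.
rewrite ler_pM2l //; lra.
Qed.

End StepMean.

Section StepConcentration.
Variables (R : realType) (V : finType) (k : nat) (c : config V k).
Hypothesis V_gt0 : (0 < #|V|)%N.
Local Notation n := (nV R V).
Local Notation inert u := (fun x => update (c u) (c x) == c u).

Lemma psi_lipschitz (a b : config V k) u : (forall v, v != u -> a v = b v) ->
  `|psi R a - psi R b| <= 4 / n.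
Proof.
move=> ab; have n_gt0 := nV_gt0 R V_gt0.
rewrite !psiE_kernel // -mulrBl -sumrB normrM normfV (gtr0_norm (exprn_gt0 2 n_gt0)).
rewrite ler_pdivrMr ?exprn_gt0 //; apply: le_trans (ler_norm_sum _ _ _) _.
(* only the terms of row or column [u] can differ, each by at most 2 *)
apply: (@le_trans _ _ (\sum_v \sum_w (2 * (v == u)%:R + 2 * (w == u)%:R))).
  apply: ler_sum => v _; rewrite -sumrB; apply: le_trans (ler_norm_sum _ _ _) _.
  apply: ler_sum => w _.
  case: (eqVneq v u) => [->|vu]; case: (eqVneq w u) => [->|wu] /=;
    rewrite ?mulr1 ?mulr0 ?addr0 ?add0r; try exact: psi_kernel_dist_le2.
  - by apply: le_trans (psi_kernel_dist_le2 _ _ _ _ _) _; lra.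
  - by rewrite (ab v vu) (ab w wu) subrr normr0.
have sum_delta : \sum_(w : V) (w == u)%:R = 1 :> R.
  by rewrite (bigD1 u) //= eqxx big1 ?addr0 // => w /negbTE ->.
rewrite (eq_bigr (fun v => 2 * (v == u)%:R * n + 2)); last first.
  by move=> v _; rewrite big_split /= -!mulr_sumr sum_delta sum_const_card mulr1 mulrA.
rewrite big_split /= -mulr_suml -mulr_sumr sum_delta sum_const_card.
rewrite (_ : 4 / n * n ^+ 2 = 4 * n); last by field; rewrite gt_eqF.
by rewrite /nV; lra.
Qed.

Lemma card_active_le u : #|[predC inert u]|%:R <= \sum_x ind_decided R (c x).
Proof.
rewrite -sum1_card natr_sum big_mkcond /=; apply: ler_sum => x _.
case cx: (c x) => [a|] /=; first by case: ifP.
by rewrite inE unfold_in /= cx update_undecided eqxx.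
Qed.

Lemma sum_card_active_le :
  \sum_u #|[predC inert u]|%:R / #|V|%:R <= n * beta R c.
Proof.
rewrite betaE // mulrC divfK ?gt_eqF ?nV_gt0 // -mulr_suml ler_pdivrMr ?nV_gt0 //.
by rewrite -sum_const_card; apply: ler_sum => u _; apply: card_active_le.
Qed.

Lemma step_fupd_inert (f : choice V) u x : inert u x ->
  step c (fupd f u x) = step c (fupd f u u).
Proof.
move=> /eqP ux; apply/ffunP => v; rewrite !ffunE.
by case: (eqVneq v u) => [->|]; rewrite ?ux ?update_id.
Qed.

Lemma step_mgf_le lam : `|lam| * (24 / n) < 3 ->
  (\sum_(f : choice V) expR (lam * (psi R (step c f)
      - (\sum_(g : choice V) psi R (step c g)) / card_fun R V V))) / card_fun R V V
  <= expR ((lam ^+ 2 * (400 * beta R c / n) / 2) / (1 - `|lam| * (24 / n) / 3)).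
Proof.
move=> lam_small; have n_gt0 := nV_gt0 R V_gt0.
have lamL : `|lam| * (4 / n) <= 1 / 2.
  have : `|lam| * (24 / n) = 6 * (`|lam| * (4 / n)) by field; rewrite gt_eqF.
  lra.
apply: le_trans (mgf_bounded_differences (G := fun f => psi R (step c f))
  (S := fun u => inert u) (d := id) V_gt0 _ _ lamL) _.
- move=> f u x y; apply: (psi_lipschitz (u := u)) => v vu.
  by rewrite !ffunE (negbTE vu).
- by move=> f u x /step_fupd_inert ->.
rewrite ler_expR.
have beta_c_ge0 := beta_ge0 R V_gt0 c.
set q := 1 - `|lam| * (24 / n) / 3.
have q_gt0 : 0 < q by rewrite /q; lra.
have q_le1 : q <= 1.
  have : 0 <= `|lam| * (24 / n) by rewrite mulr_ge0 // divr_ge0 // ltW.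
  rewrite /q; lra.
set Z := lam ^+ 2 * beta R c / n.
have Z_ge0 : 0 <= Z by apply: divr_ge0 (ltW n_gt0); apply: mulr_ge0 (sqr_ge0 _) _.
(* the variance proxy obtained is [32 beta / n], well below [400 beta / n] *)
apply: (@le_trans _ _ (32 * lam ^+ 2 / n ^+ 2 * (n * beta R c))).
  rewrite (_ : 2 * lam ^+ 2 * (4 / n) ^+ 2 = 32 * lam ^+ 2 / n ^+ 2); last by field; rewrite gt_eqF.
  by apply: ler_wpM2l sum_card_active_le; apply: divr_ge0 (sqr_ge0 _); apply: mulr_ge0 (sqr_ge0 _).
rewrite (_ : 32 * lam ^+ 2 / n ^+ 2 * (n * beta R c) = 32 * Z); last by rewrite /Z; field; rewrite gt_eqF.
rewrite (_ : lam ^+ 2 * (400 * beta R c / n) / 2 = 200 * Z); last by rewrite /Z; field; rewrite gt_eqF.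
by rewrite ler_pdivlMr //; nra.
Qed.

End StepConcentration.

Section LastRound.
Variables (R : realType) (V : finType) (k : nat) (c0 : config V k).

Lemma opn_fupd_last s (w : Omega V s.+1) g j : (j <= s)%N ->
  opn c0 (fupd w ord_max g) j = opn c0 w j.
Proof.
elim: j => [//|j IH] js /=; rewrite IH ?(ltnW js) //.
case: insubP => [i _ ij|_] //; rewrite fupd_neq //.
by rewrite -(inj_eq val_inj) /= ij neq_ltn js.
Qed.

Lemma opn_last s (w : Omega V s.+1) : opn c0 w s.+1 = step (opn c0 w s) (w ord_max).
Proof.
rewrite /=; case: insubP => [i _ iE|]; last by rewrite ltnSn.
by congr step; congr (w _); apply: val_inj.
Qed.

Lemma condE_ext s (w : Omega V s.+1) (X1 X2 : Omega V s.+1 -> R) :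
  (forall w', X1 w' = X2 w') -> condE c0 s X1 w = condE c0 s X2 w.
Proof. by move=> X12; rewrite /condE; congr (_ / _); apply: eq_bigr. Qed.

(* Given F_s, the last round's sample [w ord_max] is still uniform. *)
Lemma condE_last_round s (w : Omega V s.+1) (Y : config V k -> choice V -> R) :
  condE c0 s (fun w' => Y (opn c0 w' s) (w' ord_max)) w
  = (\sum_(f : choice V) Y (opn c0 w s) f) / #|choice V|%:R.
Proof.
rewrite /condE; set A := atom c0 s w.
have atom_opn w' : w' \in A -> opn c0 w' s = opn c0 w s.
  by rewrite inE => /forallP /(_ ord_max) /eqP.
have atom_fupd w' g : (fupd w' ord_max g \in A) = (w' \in A).
  by rewrite !inE; apply: eq_forallb => j; rewrite opn_fupd_last // -ltnS ltn_ord.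
rewrite (eq_bigr (fun w' : Omega V s.+1 => Y (opn c0 w s) (w' ord_max))); last by move=> w' /atom_opn ->.
have := @sum_eval R _ _ (mem A) ord_max (Y (opn c0 w s)) atom_fupd.
have A_gt0 : (0 < #|A|)%N by apply/card_gt0P; exists w; rewrite inE; apply/forallP.
have C_gt0 : (0 < #|choice V|)%N by apply/card_gt0P; exists (w ord_max).
move=> evalE; apply/eqP; rewrite eqr_div ?pnatr_eq0 -?lt0n //; apply/eqP.
by rewrite mulrC [RHS]mulrC.
Qed.

End LastRound.

Unset Implicit Arguments.

Theorem mainTheorem8 (R : realType) (V : finType) (k : nat)
  (hV : (0 < #|V|)%N) (c0 : config V k) (t : nat) (ht : (1 <= t)%N) :
  let psi_t := fun w : Omega V t => psi R (opn c0 w t) in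
  let beta_prev := fun w : Omega V t => beta R (opn c0 w t.-1) in
  let E := fun (X : Omega V t -> R) => condE c0 t.-1 X in
  (forall w : Omega V t, E psi_t w <= beta_prev w / nV R V) /\
  (forall w : Omega V t,
     bernstein (24 / nV R V) (400 * beta_prev w / nV R V)
       (fun lam => E (fun w' => expR (lam * (psi_t w' - E psi_t w'))) w)).
Proof.
case: t ht => [//|s] _ psi_t beta_prev E /=.
have psi_tE w' : psi_t w' = psi R (step (opn c0 w' s) (w' ord_max)).
  by rewrite /psi_t opn_last.
have E_psi w : E psi_t w = (\sum_(f : choice V) psi R (step (opn c0 w s) f)) / #|choice V|%:R.
  rewrite /E /= (condE_ext _ _ psi_tE).
  exact: (condE_last_round c0 w (fun c f => psi R (step c f))).
split=> w; first by rewrite E_psi; exact: mean_psi_step_le.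
move=> lam lam_small; rewrite /E /=.
pose Y (c : config V k) (f : choice V) := expR (lam * (psi R (step c f)
                 - (\sum_(g : choice V) psi R (step c g)) / #|choice V|%:R)).
rewrite (condE_ext _ _ (X2 := fun w' => Y (opn c0 w' s) (w' ord_max))); last first.
  by move=> w'; rewrite psi_tE -/(E psi_t w') E_psi.
rewrite (condE_last_round c0 w Y).
exact: step_mgf_le.
Qed.
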